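(* Let $\mathbf{A}\in\mathbb{R}^{m\times n}$ be an $s$-regular matrix and $\mathbf{b}\in\mathbb{R}^m$, where $s$ is an integer with $0<s<n$, and let $f(\mathbf{x})=\|\mathbf{A}\mathbf{x}-\mathbf{b}\|^2$. Then the number of BF vectors of the problem (P): minimize $f(\mathbf{x})$ subject to $\|\mathbf{x}\|_0\le s$, is finite.
   Context: $\|\mathbf{x}\|_0$ denotes the number of nonzero components of $\mathbf{x}$ and $C_s=\{\mathbf{x}:\|\mathbf{x}\|_0\le s\}$; $I_1(\mathbf{x})=\{i:x_i\neq 0\}$. A matrix $\mathbf{A}$ is $s$-regular if for every index set $I\subseteq\{1,\dots,n\}$ with $|I|=s$ the columns of $\mathbf{A}$ indexed by $I$ are linearly independent. A vector $\mathbf{x}^*\in C_s$ is a basic feasible (BF) vector of (P) if: when $\|\mathbf{x}^*\|_0<s$, $\nabla f(\mathbf{x}^* )=0$; and when $\|\mathbf{x}^*\|_0=s$, $\nabla_i f(\mathbf{x}^* )=0$ for all $i\in I_1(\mathbf{x}^* )$. *)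

From HB Require Import structures.
From mathcomp Require Import all_boot all_order all_algebra.
From mathcomp Require Import all_classical all_reals all_analysis.
Set Implicit Arguments. Unset Strict Implicit. Unset Printing Implicit Defensive.
Import Order.TTheory GRing.Theory Num.Theory.
Local Open Scope ring_scope.

Definition l0 (R : realType) (n : nat) (x : 'cV[R]_n) : nat :=
  #|[set i : 'I_n | x i 0 != 0]|.

Definition supp (R : realType) (n : nat) (x : 'cV[R]_n) : {set 'I_n} :=
  [set i : 'I_n | x i 0 != 0].

Definition s_regular (R : realType) (m n s : nat) (A : 'M[R]_(m, n)) : Prop :=
  forall I : {set 'I_n}, #|I| = s ->
    forall c : 'cV[R]_n, (forall j, j \notin I -> c j 0 = 0) ->
      A *m c = 0 -> c = 0.

Definition lsq (R : realType) (m n : nat) (A : 'M[R]_(m, n)) (b : 'cV[R]_m)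
  (x : 'cV[R]_n) : R := \sum_(k < m) ((A *m x - b) k 0) ^+ 2.

Definition partial (R : realType) (n : nat) (f : 'cV[R]_n -> R) (i : 'I_n)
  (x : 'cV[R]_n) : R :=
  derive1 (fun t : R => f (x + t *: delta_mx i 0)) 0.

Definition grad_zero (R : realType) (n : nat) (f : 'cV[R]_n -> R) (x : 'cV[R]_n) : Prop :=
  forall i : 'I_n, partial f i x = 0.

Definition BF (R : realType) (n s : nat) (f : 'cV[R]_n -> R) (x : 'cV[R]_n) : Prop :=
  (l0 x <= s)%N /\
  ((l0 x < s)%N -> grad_zero f x) /\
  (l0 x = s -> forall i, i \in supp x -> partial f i x = 0).

From HB Require Import structures.
From mathcomp Require Import all_boot all_order all_algebra.
From mathcomp Require Import all_classical all_reals all_analysis.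
From mathcomp Require Import ring.
Set Implicit Arguments. Unset Strict Implicit. Unset Printing Implicit Defensive.
Import Order.TTheory GRing.Theory Num.Theory.
Local Open Scope ring_scope.

(* A BF vector x satisfies the normal equations (A^T (A x - b))_i = 0 for i in
   its support.  If two BF vectors share their support S, their difference d
   vanishes off S while A^T A d vanishes on S, so |A d|^2 = d^T A^T A d = 0;
   as |S| <= s, s-regularity gives d = 0.  Thus a BF vector is determined by
   its support, of which there are finitely many. *)

Lemma exists_superset_card (T : finType) (S : {set T}) (k : nat) :
  (#|S| <= k <= #|T|)%N -> exists2 I : {set T}, S \subset I & #|I| = k.
Proof.
case/andP=> leSk lekT.
have : (k - #|S| <= #|~: S|)%N by rewrite -(leq_add2l #|S|) cardsC subnKC.
case/card_geqP=> r [uniq_r size_r sub_r].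
exists (S :|: [set:: r]); first exact: finset.subsetUl.
have disj : [disjoint [set:: r] & S].
  rewrite finset.disjoints_subset; apply/fintype.subsetP=> x.
  by rewrite inE; exact: sub_r.
have card_r : #|[set:: r]| = (k - #|S|)%N by rewrite cardsE (card_uniqP uniq_r).
apply/eqP; rewrite finset.setUC -(subnK leSk) -card_r.
by rewrite (leq_card_setU _ _).2.
Qed.

Lemma supp_eq0 (R : realType) (n : nat) (x : 'cV[R]_n) (i : 'I_n) :
  i \notin supp x -> x i 0 = 0.
Proof. by rewrite inE negbK => /eqP. Qed.

Lemma s_regular_sparse_ker (R : realType) (m n s : nat) (A : 'M[R]_(m, n))
    (c : 'cV[R]_n) :
  (s <= n)%N -> s_regular s A -> (l0 c <= s)%N -> A *m c = 0 -> c = 0.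
Proof.
move=> le_sn regA le_cs Ac0.
have [I supp_sub_I card_I] : exists2 I : {set 'I_n}, supp c \subset I & #|I| = s.
  by apply: exists_superset_card; rewrite le_cs card_ord.
apply: (regA I card_I) Ac0 => j jNI; apply: supp_eq0.
by apply: contra jNI; apply: (fintype.subsetP supp_sub_I).
Qed.

Lemma trmx_mulmx_self_eq0 (R : realDomainType) (m : nat) (v : 'cV[R]_m) :
  (v^T *m v) 0 0 = 0 -> v = 0.
Proof.
move=> vTv0; have sum_sq0 : \sum_(k < m) v k 0 ^+ 2 = 0.
  by rewrite -[RHS]vTv0 mxE; apply: eq_bigr => k _; rewrite mxE expr2.
apply/matrixP=> k j; rewrite (ord1 j) mxE; apply/eqP; rewrite -sqrf_eq0.
by rewrite (psumr_eq0P (fun k _ => sqr_ge0 (v k 0)) sum_sq0).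
Qed.

Lemma derive1_quadratic0 (R : realType) (a c q : R) :
  derive1 (fun t : R => a + t * c + t ^+ 2 * q) 0 = c.
Proof.
rewrite derive1E derive_val !(scaler0, scale0r, add0r, addr0, mul1r).
exact: mulr1.
Qed.

Lemma BF_partial_supp (R : realType) (n s : nat) (f : 'cV[R]_n -> R)
    (x : 'cV[R]_n) :
  BF s f x -> {in supp x, forall i, partial f i x = 0}.
Proof.
case=> le_xs [grad0 grad_supp0] i xi.
move: le_xs; rewrite leq_eqVlt => /orP[/eqP eq_xs | lt_xs].
- exact: grad_supp0.
- exact: grad0.
Qed.

Section LeastSquares.
Variables (R : realType) (m n : nat) (A : 'M[R]_(m, n)) (b : 'cV[R]_m).

Lemma partial_lsq (i : 'I_n) (x : 'cV[R]_n) :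
  partial (lsq A b) i x = 2 * (A^T *m (A *m x - b)) i 0.
Proof.
set r := A *m x - b.
have lsq_line t : lsq A b (x + t *: delta_mx i 0) =
    \sum_k r k 0 ^+ 2 + t * (2 * (A^T *m r) i 0) + t ^+ 2 * \sum_k A k i ^+ 2.
  rewrite /lsq mxE !big_distrr -!big_split /=; apply: eq_bigr => k _.
  rewrite mulmxDr -scalemxAr -colE addrAC -/r !mxE; ring.
by rewrite /partial (funext lsq_line) derive1_quadratic0.
Qed.

Lemma BF_lsq_normal_eq (s : nat) (x : 'cV[R]_n) :
  BF s (lsq A b) x -> {in supp x, forall i, (A^T *m (A *m x - b)) i 0 = 0}.
Proof.
move=> BFx i xi; have /eqP := BF_partial_supp BFx xi.
by rewrite partial_lsq mulf_eq0 pnatr_eq0 => /eqP.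
Qed.

Lemma BF_lsq_eq_supp (s : nat) (x y : 'cV[R]_n) :
  (s <= n)%N -> s_regular s A -> BF s (lsq A b) x -> BF s (lsq A b) y ->
  supp x = supp y -> x = y.
Proof.
move=> le_sn regA BFx BFy eq_supp; set d := x - y.
have d_out i : i \notin supp x -> d i 0 = 0.
  by move=> xNi; rewrite !mxE !supp_eq0 ?subr0 -?eq_supp.
have normal_d : {in supp x, forall i, (A^T *m (A *m d)) i 0 = 0}.
  move=> i xi; have -> : A *m d = (A *m x - b) - (A *m y - b).
    by rewrite mulmxBr opprB addrA subrK.
  rewrite mulmxBr mxE (BF_lsq_normal_eq BFx xi) add0r mxE.
  by rewrite (BF_lsq_normal_eq BFy) ?oppr0 // -eq_supp.
have Ad0 : A *m d = 0.
  apply: trmx_mulmx_self_eq0; rewrite trmx_mul -mulmxA mxE; apply: big1 => i _.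
  rewrite mxE; case: (boolP (i \in supp x)) => [/normal_d -> | /d_out ->].
  - exact: mulr0.
  - exact: mul0r.
have le_ds : (l0 d <= s)%N.
  apply: leq_trans (proj1 BFx); apply: subset_leq_card.
  by apply/fintype.subsetP=> i; apply: contraTT => /d_out; rewrite inE negbK => ->.
by apply: subr0_eq; apply: s_regular_sparse_ker le_sn regA le_ds Ad0.
Qed.

End LeastSquares.

Local Open Scope classical_set_scope.

Theorem lemma2p1 (R : realType) (m n s : nat) (A : 'M[R]_(m, n)) (b : 'cV[R]_m) :
  (0 < s)%N -> (s < n)%N -> @s_regular R m n s A ->
  finite_set [set x : 'cV[R]_n | @BF R n s (@lsq R m n A b) x].
Proof.
move=> _ /ltnW le_sn regA.
have supp_inj : {in [set x | BF s (lsq A b) x] &, injective (@supp R n)}.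
  by move=> x y; rewrite !in_setE; apply: BF_lsq_eq_supp le_sn regA.
by rewrite -(eq_finite_set (inj_card_eq supp_inj)); exact: finite_finset.
Qed.
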